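(* Let $T>0$, $\mathcal{R}=\frac{2\pi}{T}$, and assume that $\mathcal{R}^{-2}=\left(\frac{T}{2\pi}\right)^2$ has irrationality measure equal to $2$. For $m,k\in\mathbb{Z}$ set \[ \lambda_2^+(m,k)=\left|\mathcal{R}|m|-\sqrt{1+k^2}\right|. \] Then there exists a constant $\widetilde{c}>0$ such that $\lambda_2^+(m,k)>\frac{\widetilde{c}}{(1+k^2)^2}$ for all $m,k\in\mathbb{Z}$.
   Context: The irrationality measure of a real number $r$ is the infimum of all $\rho$ for which there exists a constant $c$ such that $\frac{c}{q^\rho}<|r-\frac{p}{q}|$ for all $\frac{p}{q}\in\mathbb{Q}$. (In the paper, $\lambda_2^+(m,k)$ is the smaller positive eigenvalue of the Hermitian matrix $\mathrm{diag}(1,1,-1,-1)-\mathcal{R}imM_1-ikM_2$.) *)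

From Stdlib Require Import Reals ZArith.
Open Scope R_scope.

Definition irr_exponent_ok (r rho : R) : Prop :=
  exists c : R, 0 < c /\
    forall p q : Z, (0 < q)%Z -> c / Rpower (IZR q) rho < Rabs (r - IZR p / IZR q).

(* "the irrationality measure of r equals mu": mu is the infimum (greatest
   lower bound) of the set of admissible exponents.  If that set is empty
   (infimum +oo) no real mu satisfies this. *)
Definition irrationality_measure_eq (r mu : R) : Prop :=
  (forall rho, irr_exponent_ok r rho -> mu <= rho) /\
  (forall b, (forall rho, irr_exponent_ok r rho -> b <= rho) -> b <= mu).

Definition Rcal (T : R) : R := 2 * PI / T.

Definition lambda2plus (T : R) (m k : Z) : R :=
  Rabs (Rcal T * IZR (Z.abs m) - sqrt (1 + IZR k ^ 2)).

(* Write q = 1 + k^2 and s = sqrt q.  Since the irrationality measure of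
   r = (T / 2 pi)^2 is 2 < 5/2, the exponent 5/2 is admissible, so
   |r - m^2/q| > c / (q^2 s).  Multiplying by R^2 q (and using R^2 r = 1)
   gives |(R|m|)^2 - s^2| > R^2 c / (q s).  Either |R|m| - s| >= 1, or
   R|m| + s <= 3 s and the difference of squares yields
   |R|m| - s| > R^2 c / (3 q s^2) = R^2 c / (3 q^2). *)
From Stdlib Require Import Reals ZArith Psatz Classical.
Open Scope R_scope.

Lemma irr_exponent_ok_weaken {r rho rho' : R} :
  rho <= rho' -> irr_exponent_ok r rho -> irr_exponent_ok r rho'.
Proof.
  intros hle [c [hc hok]].
  exists c; split; [exact hc|].
  intros p q hq.
  assert (hq1 : 1 <= IZR q) by (apply IZR_le; lia).
  assert (hpow : Rpower (IZR q) rho <= Rpower (IZR q) rho') by (apply Rle_Rpower; lra).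
  assert (hpos : 0 < Rpower (IZR q) rho) by apply exp_pos.
  apply Rle_lt_trans with (c / Rpower (IZR q) rho); [|exact (hok p q hq)].
  apply Rmult_le_compat_l; [lra|].
  apply Rinv_le_contravar; assumption.
Qed.

Lemma irrationality_measure_exponent_ok {r mu : R} (b : R) :
  irrationality_measure_eq r mu -> mu < b -> irr_exponent_ok r b.
Proof.
  intros [_ hglb] hlt.
  apply NNPP; intro hnot.
  assert (hb : b <= mu).
  { apply hglb; intros rho hrho.
    destruct (Rle_dec rho b) as [hle|hgt]; [|lra].
    exfalso; apply hnot; exact (irr_exponent_ok_weaken hle hrho). }
  lra.
Qed.

Lemma Rpower_five_halves (q : R) : 0 < q -> Rpower q (5/2) = q ^ 2 * sqrt q.
Proof.
  intro hq.
  replace (5/2) with (INR 2 + / 2) by (simpl; lra).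
  rewrite Rpower_plus, Rpower_pow, Rpower_sqrt by exact hq.
  reflexivity.
Qed.

Lemma Rabs_sqr_sub_le {a s : R} :
  0 <= a -> 1 <= s -> Rabs (a - s) <= 1 -> Rabs (a ^ 2 - s ^ 2) <= 3 * s * Rabs (a - s).
Proof.
  intros ha hs hclose.
  replace (a ^ 2 - s ^ 2) with ((a - s) * (a + s)) by ring.
  rewrite Rabs_mult, (Rabs_right (a + s)) by lra.
  assert (a + s <= 3 * s) by (pose proof (Rle_abs (a - s)); lra).
  pose proof (Rabs_pos (a - s)).
  nra.
Qed.

Lemma Rabs_scaled_sqr_sub {R0 r q : R} (n : R) :
  R0 ^ 2 * r = 1 -> 0 < q -> Rabs (R0 ^ 2 * n ^ 2 - q) = R0 ^ 2 * q * Rabs (r - n ^ 2 / q).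
Proof.
  intros hr hq.
  replace (R0 ^ 2 * n ^ 2 - q) with (- (R0 ^ 2 * q) * (r - n ^ 2 / q))
    by (transitivity (- (R0 ^ 2 * r) * q + R0 ^ 2 * n ^ 2); [field; lra | rewrite hr; ring]).
  rewrite Rabs_mult, Rabs_Ropp, (Rabs_right (R0 ^ 2 * q)); [reflexivity|].
  apply Rle_ge, Rmult_le_pos; [apply pow2_ge_0 | lra].
Qed.

Lemma Rcal_pos {T : R} : 0 < T -> 0 < Rcal T.
Proof.
  intro hT; unfold Rcal; pose proof PI_RGT_0.
  apply Rdiv_lt_0_compat; lra.
Qed.

Lemma Rcal_sqr_mul {T : R} : 0 < T -> Rcal T ^ 2 * (T / (2 * PI)) ^ 2 = 1.
Proof.
  intro hT; unfold Rcal; pose proof PI_RGT_0.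
  field; lra.
Qed.

Lemma lambda2plus_lower_bound {T c : R} {m k : Z} :
  0 < T -> 0 < c ->
  (forall p q : Z, (0 < q)%Z ->
     c / Rpower (IZR q) (5/2) < Rabs ((T / (2 * PI)) ^ 2 - IZR p / IZR q)) ->
  lambda2plus T m k <= 1 ->
  Rcal T ^ 2 * c / 3 / (1 + IZR k ^ 2) ^ 2 < lambda2plus T m k.
Proof.
  intros hT hc hok hclose.
  unfold lambda2plus in *.
  pose proof (Rcal_pos hT) as hR0.
  pose proof (Rcal_sqr_mul hT) as hr.
  set (R0 := Rcal T) in *.
  set (r := (T / (2 * PI)) ^ 2) in *.
  set (n := IZR (Z.abs m)) in *.
  set (q := 1 + IZR k ^ 2) in *.
  set (s := sqrt q) in *.
  assert (hn : 0 <= n) by (apply IZR_le; lia).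
  assert (hq : 1 <= q) by (unfold q; nra).
  assert (hs2 : s ^ 2 = q) by (unfold s; rewrite pow2_sqrt; lra).
  assert (hs : 1 <= s) by (unfold s; rewrite <- sqrt_1; apply sqrt_le_1_alt; lra).
  assert (happrox : c / (q ^ 2 * s) < Rabs (r - n ^ 2 / q)).
  { specialize (hok (Z.abs m ^ 2)%Z (1 + k ^ 2)%Z ltac:(nia)).
    assert (hp : IZR (Z.abs m ^ 2) = n ^ 2) by (unfold n; rewrite pow_IZR; reflexivity).
    assert (hqz : IZR (1 + k ^ 2) = q) by (unfold q; rewrite plus_IZR, pow_IZR; reflexivity).
    rewrite hp, hqz, Rpower_five_halves in hok by lra.
    exact hok. }
  assert (hsqr : R0 ^ 2 * c / (q * s) < Rabs ((R0 * n) ^ 2 - s ^ 2)).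
  { rewrite hs2, Rpow_mult_distr, (Rabs_scaled_sqr_sub n hr) by lra.
    replace (R0 ^ 2 * c / (q * s)) with (R0 ^ 2 * q * (c / (q ^ 2 * s))) by (field; lra).
    apply Rmult_lt_compat_l; [nra | exact happrox]. }
  pose proof (Rabs_sqr_sub_le (Rmult_le_pos _ _ (Rlt_le _ _ hR0) hn) hs hclose) as hfactor.
  replace (R0 ^ 2 * c / 3 / q ^ 2) with (R0 ^ 2 * c / (q * s) / (3 * s))
    by (rewrite <- hs2; field; lra).
  apply Rmult_lt_reg_r with (3 * s); [lra|].
  unfold Rdiv at 1; rewrite Rmult_assoc, Rinv_l, Rmult_1_r by lra.
  lra.
Qed.

Theorem proposition5p2 (T : R) (hT : 0 < T)
  (hmeas : irrationality_measure_eq ((T / (2 * PI)) ^ 2) 2) :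
  exists ct : R, 0 < ct /\
    forall m k : Z, lambda2plus T m k > ct / (1 + IZR k ^ 2) ^ 2.
Proof.
  destruct (irrationality_measure_exponent_ok (5/2) hmeas ltac:(lra)) as [c [hc hok]].
  pose proof (Rcal_pos hT) as hR0.
  set (ct := Rmin (1/2) (Rcal T ^ 2 * c / 3)).
  assert (hct : 0 < ct).
  { apply Rmin_glb_lt; [lra|].
    apply Rdiv_lt_0_compat; [apply Rmult_lt_0_compat; [apply pow_lt|]|]; lra. }
  exists ct; split; [exact hct|].
  intros m k.
  assert (hq2 : 1 <= (1 + IZR k ^ 2) ^ 2) by nra.
  assert (hdiv : ct / (1 + IZR k ^ 2) ^ 2 <= ct).
  { apply Rmult_le_reg_r with ((1 + IZR k ^ 2) ^ 2); [lra|].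
    unfold Rdiv; rewrite Rmult_assoc, Rinv_l, Rmult_1_r by lra. nra. }
  destruct (Rle_dec (lambda2plus T m k) 1) as [hclose|hfar].
  - apply Rle_lt_trans with (Rcal T ^ 2 * c / 3 / (1 + IZR k ^ 2) ^ 2).
    + apply Rmult_le_compat_r; [left; apply Rinv_0_lt_compat; lra | apply Rmin_r].
    + exact (lambda2plus_lower_bound hT hc hok hclose).
  - pose proof (Rmin_l (1/2) (Rcal T ^ 2 * c / 3)).
    unfold ct in *; lra.
Qed.
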